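(* Let $\mathcal{A}\subset\mathscr{P}(\mathbb{N}_0)$ be a Furstenberg family and let $f:X\to X$ be a continuous map on a (not necessarily separable nor complete) metric space $(X,d)$. Then: (a) if $(\mathcal{K}(X),\overline f)$ is point-$\mathcal{A}$-transitive, then $(X,f)$ is point-$\mathcal{A}$-transitive; (b) if $(\mathcal{F}_E(X),\hat f)$ is point-$\mathcal{A}$-transitive, then $(X,f)$ is point-$\mathcal{A}$-transitive; (c) if $(X,f)$ is point-$\mathcal{A}$-transitive, then $(X^N,f_{(N)})$ is point-$\mathcal{A}$-recurrent for every $N\in\mathbb{N}$; (d) if $(X^N,f_{(N)})$ is point-$\mathcal{A}$-recurrent for every $N\in\mathbb{N}$, then $(\mathcal{K}(X),\overline f)$ is point-$\mathcal{A}$-recurrent; (e) if $(X^N,f_{(N)})$ is point-$\mathcal{A}$-recurrent for every $N\in\mathbb{N}$, then $(\mathcal{F}_\infty(X),\hat f)$ is point-$\mathcal{A}$-recurrent.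
   Context: $\mathbb{N}=\{1,2,\dots\}$, $\mathbb{N}_0=\mathbb{N}\cup\{0\}$, $\mathbb{I}=[0,1]$. A Furstenberg family is $\mathcal{A}\subset\mathscr{P}(\mathbb{N}_0)$ with $\varnothing\notin\mathcal{A}$ and upward hereditary. For a continuous map $g$ on a topological space $Y$, $x\in Y$, $U\subset Y$, $\mathcal{N}_g(x,U)=\{n\in\mathbb{N}_0:g^n(x)\in U\}$. $x$ is $\mathcal{A}$-transitive for $g$ if $\mathcal{N}_g(x,U)\in\mathcal{A}$ for every non-empty open $U\subset Y$, and $(Y,g)$ is point-$\mathcal{A}$-transitive if such a point exists. $x$ is $\mathcal{A}$-recurrent for $g$ if $\mathcal{N}_g(x,U)\in\mathcal{A}$ for every neighbourhood $U$ of $x$, and $(Y,g)$ is point-$\mathcal{A}$-recurrent if the set of such points is dense. $f_{(N)}=f\times\cdots\times f$ on $X^N$ with product topology. Fuzzy setting: for $u:X\to\mathbb{I}$, $u_\alpha=\{x:u(x)\ge\alpha\}$ ($\alpha\in]0,1]$), $u_0=\overline{\{x:u(x)>0\}}$. $\mathcal{F}(X)$: upper-semicontinuous $u:X\to\mathbb{I}$ with $u_0$ compact and $u_1\ne\varnothing$. $\mathcal{K}(X)$: non-empty compact subsets of $X$ with Hausdorff metric $d_H(A,B)=\max\{\sup_{a\in A}d(a,B),\sup_{b\in B}d(b,A)\}$; $\overline f(K)=f(K)$. Zadeh extension: $\hat f(u)(x)=\sup\{u(y):f(y)=x\}$ (and $0$ if $f^{-1}(\{x\})=\varnothing$). $d_\infty(u,v)=\sup_{\alpha\in\mathbb{I}}d_H(u_\alpha,v_\alpha)$;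 with $\overline d((x,\alpha),(y,\beta))=\max\{d(x,y),|\alpha-\beta|\}$ on $X\times\mathbb{I}$ and $\operatorname{end}(u)=\{(x,\alpha):u(x)\ge\alpha\}$, $d_E(u,v)$ is the $\overline d$-Hausdorff distance between $\operatorname{end}(u)$ and $\operatorname{end}(v)$. $\mathcal{F}_\infty(X)=(\mathcal{F}(X),d_\infty)$, $\mathcal{F}_E(X)=(\mathcal{F}(X),d_E)$. *)

From mathcomp Require Import all_boot all_order all_algebra.
From mathcomp Require Import boolp classical_sets cardinality reals.
Set Implicit Arguments. Unset Strict Implicit. Unset Printing Implicit Defensive.
Import Order.TTheory GRing.Theory Num.Theory.
Local Open Scope classical_set_scope.
Local Open Scope ring_scope.

Section Defs.
Variable R : realType.

Definition is_metric (X : Type) (d : X -> X -> R) : Prop :=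
  [/\ (forall x y, 0 <= d x y),
      (forall x y, d x y = 0 <-> x = y),
      (forall x y, d x y = d y x) &
      (forall x y z, d x z <= d x y + d y z)].

Definition mopen_in (Y : Type) (D : Y -> Y -> R) (S : set Y) (U : set Y) : Prop :=
  U `<=` S /\
  forall x, U x -> exists2 e : R, 0 < e & forall y, S y -> D x y < e -> U y.

Definition mopen (Y : Type) (D : Y -> Y -> R) (U : set Y) : Prop :=
  mopen_in D setT U.

Definition mclosure (X : Type) (d : X -> X -> R) (B : set X) : set X :=
  [set x | forall e : R, 0 < e -> exists2 y, B y & d x y < e].

Definition mcompact (X : Type) (d : X -> X -> R) (K : set X) : Prop :=
  forall C : set (set X), (forall U, C U -> mopen d U) ->
    K `<=` \bigcup_(U in C) U ->
    exists2 C', C' `<=` C /\ finite_set C' & K `<=` \bigcup_(U in C') U.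

Definition mcontinuous (X : Type) (d : X -> X -> R) (f : X -> X) : Prop :=
  forall x (e : R), 0 < e -> exists2 del : R, 0 < del &
    forall y, d x y < del -> d (f x) (f y) < e.

Definition furstenberg (A : set (set nat)) : Prop :=
  ~ A set0 /\ (forall F G : set nat, A F -> F `<=` G -> A G).

Definition Nset (Y : Type) (g : Y -> Y) (x : Y) (U : set Y) : set nat :=
  [set n | U (iter n g x)].

Definition A_transitive_pt (A : set (set nat)) (Y : Type) (S : set Y)
  (op : set Y -> Prop) (g : Y -> Y) (x : Y) : Prop :=
  S x /\ forall U, op U -> U !=set0 -> A (Nset g x U).

Definition point_A_transitive (A : set (set nat)) (Y : Type) (S : set Y)
  (op : set Y -> Prop) (g : Y -> Y) : Prop :=
  exists x, A_transitive_pt A S op g x.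

Definition nbhd (Y : Type) (op : set Y -> Prop) (x : Y) (U : set Y) : Prop :=
  exists V, [/\ op V, V x & V `<=` U].

Definition A_recurrent_pt (A : set (set nat)) (Y : Type) (S : set Y)
  (op : set Y -> Prop) (g : Y -> Y) (x : Y) : Prop :=
  S x /\ forall U, nbhd op x U -> A (Nset g x U).

Definition point_A_recurrent (A : set (set nat)) (Y : Type) (S : set Y)
  (op : set Y -> Prop) (g : Y -> Y) : Prop :=
  forall V, op V -> V !=set0 -> exists2 x, V x & A_recurrent_pt A S op g x.

Definition prod_open (X : Type) (d : X -> X -> R) (N : nat) (U : set ('I_N -> X)) : Prop :=
  forall x, U x -> exists V : 'I_N -> set X,
    (forall i, mopen d (V i) /\ V i (x i)) /\
    (forall y : 'I_N -> X, (forall i, V i (y i)) -> U y).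

Definition fN (X : Type) (N : nat) (f : X -> X) : ('I_N -> X) -> ('I_N -> X) :=
  fun x i => f (x i).

Definition pt_set_dist (Y : Type) (D : Y -> Y -> R) (a : Y) (B : set Y) : R :=
  inf [set D a b | b in B].

Definition hausdorff (Y : Type) (D : Y -> Y -> R) (A B : set Y) : R :=
  Num.max (sup [set pt_set_dist D a B | a in A])
          (sup [set pt_set_dist D b A | b in B]).

Definition Kspace (X : Type) (d : X -> X -> R) : set (set X) :=
  [set K | mcompact d K /\ K !=set0].

Definition Kmap (X : Type) (f : X -> X) : set X -> set X := fun K => f @` K.

Definition alpha_cut (X : Type) (d : X -> X -> R) (u : X -> R) (a : R) : set X :=
  if a == 0 then mclosure d [set x | 0 < u x] else [set x | a <= u x].

Definition usc (X : Type) (d : X -> X -> R) (u : X -> R) : Prop :=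
  forall x (t : R), u x < t -> exists2 e : R, 0 < e &
    forall y, d x y < e -> u y < t.

Definition Fspace (X : Type) (d : X -> X -> R) : set (X -> R) :=
  [set u | [/\ (forall x, 0 <= u x <= 1), usc d u,
              mcompact d (alpha_cut d u 0) & alpha_cut d u 1 !=set0]].

Definition zadeh (X : Type) (f : X -> X) (u : X -> R) : X -> R :=
  fun x => if pselect (exists y, f y = x) then sup [set u y | y in [set y | f y = x]]
           else 0.

Definition d_infty (X : Type) (d : X -> X -> R) (u v : X -> R) : R :=
  sup [set hausdorff d (alpha_cut d u a) (alpha_cut d v a) | a in [set a : R | 0 <= a <= 1]].

Definition dbar (X : Type) (d : X -> X -> R) (p q : X * R) : R :=
  Num.max (d p.1 q.1) `|p.2 - q.2|.

Definition endograph (X : Type) (u : X -> R) : set (X * R) :=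
  [set p | 0 <= p.2 <= 1 /\ p.2 <= u p.1].

Definition d_E (X : Type) (d : X -> X -> R) (u v : X -> R) : R :=
  hausdorff (dbar d) (endograph u) (endograph v).

End Defs.

(* (a), (b): let x be a point of an A-transitive compactum K0 (resp. of the 1-cut of an
   A-transitive fuzzy set u0). The compacta inside a ball B(y, r), r < e (resp. the
   fuzzy sets whose r-cut lies in B(y, r)) form a non-empty open set in the Hausdorff
   (resp. endograph) metric, and every time K0 (resp. u0) visits it, the orbit of x
   visits B(y, e).
   (c): if x is A-transitive, every tuple (f^(m_1) x, ..., f^(m_N) x) is A-recurrent for
   f_(N): the times at which x enters the open set of the z with f^(m_i) z in W_i for all i
   are times at which the tuple enters the box W_1 x ... x W_N. Such tuples are dense.
   (d), (e): approximate a compactum K (resp. a fuzzy set u) by a finite e-net g, then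
   move g to a nearby A-recurrent tuple v. The finite set {v_i} (resp. the finite fuzzy
   set with values sup_(B(g_i, e)) u at the points v_i) lies within 2e of K (resp. u),
   and it is A-recurrent because w |-> {w_i} (resp. the fuzzy set on w) is a
   non-expanding semiconjugacy from f_(N) to the induced map. *)

From mathcomp Require Import all_boot all_order all_algebra.
From mathcomp Require Import boolp classical_sets cardinality reals.
From mathcomp Require Import lra.
Set Implicit Arguments. Unset Strict Implicit. Unset Printing Implicit Defensive.
Import Order.TTheory GRing.Theory Num.Theory.
Local Open Scope classical_set_scope.
Local Open Scope ring_scope.

Lemma sup_le_ub (R : realType) (S : set R) (c : R) : 0 <= c -> ubound S c -> sup S <= c.
Proof.
move=> c0 Sc; have [->|S0] := eqVneq S set0; first by rewrite sup0.
by apply: ge_sup => //; apply/set0P.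
Qed.

Section Hausdorff.
Variables (R : realType) (Y : Type) (D : Y -> Y -> R).
Hypothesis D_ge0 : forall a b, 0 <= D a b.

Lemma pt_set_dist_le a (B : set Y) b : B b -> pt_set_dist D a B <= D a b.
Proof. by move=> Bb; apply: ge_inf; [exists 0 => _ [? _ <-] | exists b]. Qed.

Lemma hausdorff_le (P Q : set Y) (c : R) : 0 <= c ->
  (forall a, P a -> exists2 b, Q b & D a b <= c) ->
  (forall b, Q b -> exists2 a, P a & D b a <= c) ->
  hausdorff D P Q <= c.
Proof.
move=> c0 PQ QP; rewrite /hausdorff ge_max; apply/andP; split.
  apply: sup_le_ub => // _ [a /PQ [b Qb le] <-].
  exact: le_trans (pt_set_dist_le _ Qb) le.
apply: sup_le_ub => // _ [b /QP [a Pa le] <-].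
exact: le_trans (pt_set_dist_le _ Pa) le.
Qed.

Lemma hausdorff_lt_near (P Q : set Y) del b : hausdorff D P Q < del -> Q b ->
  has_ubound [set pt_set_dist D b' P | b' in Q] -> P !=set0 ->
  exists2 a, P a & D b a < del.
Proof.
move=> PQ Qb ub [a0 Pa0].
have bP : pt_set_dist D b P < del.
  apply: le_lt_trans PQ; rewrite /hausdorff le_max; apply/orP; right.
  by apply: ub_le_sup => //; exists b.
have [_ [a Pa <-] lt] := inf_lt (ex_intro _ (D b a0) (imageP _ Pa0)) bP.
by exists a.
Qed.

End Hausdorff.

Section FuzzyPoints.
Variables (R : realType) (X : Type).

Definition fuzzy_of_points n (g : 'I_n -> X) (lam : 'I_n -> R) : X -> R :=
  fun z => \big[Num.max/0]_(i | `[< g i = z >]) lam i.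

Variables (n : nat) (g : 'I_n -> X) (lam : 'I_n -> R).

Lemma fuzzy_of_points_ge0 z : 0 <= fuzzy_of_points g lam z.
Proof. exact: bigmax_ge_id. Qed.

Lemma le_fuzzy_of_points i : lam i <= fuzzy_of_points g lam (g i).
Proof. exact/le_bigmax_cond/asboolT. Qed.

Lemma fuzzy_of_points_le z (c : R) : 0 <= c -> (forall i, g i = z -> lam i <= c) ->
  fuzzy_of_points g lam z <= c.
Proof. by move=> c0 lamc; apply: bigmax_le => // i /asboolP /lamc. Qed.

Lemma fuzzy_of_points_eq0 z : ~ range g z -> fuzzy_of_points g lam z = 0.
Proof. by move=> gz; apply: bigmax_eq_id => i /asboolP gi; case: gz; exists i. Qed.

Lemma fuzzy_of_points_geP z (a : R) : 0 < a -> a <= fuzzy_of_points g lam z ->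
  exists2 i, g i = z & a <= lam i.
Proof.
move=> a0 az; have [//|none] := pselect (exists2 i, g i = z & a <= lam i).
suff : fuzzy_of_points g lam z < a by rewrite ltNge az.
apply: bigmax_lt => // i /asboolP gi; rewrite ltNge; apply/negP => ai.
by apply: none; exists i.
Qed.

End FuzzyPoints.

Lemma iter_semiconj (T T' : Type) (h : T -> T) (g : T' -> T') (phi : T -> T') :
  (forall w, g (phi w) = phi (h w)) -> forall m w, iter m g (phi w) = phi (iter m h w).
Proof. by move=> gh; elim=> [//|m IH] w /=; rewrite IH gh. Qed.

Section Zadeh.
Variables (R : realType) (X : Type) (f : X -> X).

Lemma zadeh_fuzzy_of_points n (g : 'I_n -> X) (lam : 'I_n -> R) :
  zadeh f (fuzzy_of_points g lam) = fuzzy_of_points (fun i => f (g i)) lam.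
Proof.
apply: funext => z; rewrite /zadeh; case: pselect => [[y0 fy0]|nz]; last first.
  by rewrite fuzzy_of_points_eq0 // => -[i _ fgi]; apply: nz; exists (g i).
set S := [set fuzzy_of_points g lam y | y in [set y | f y = z]].
set rhs := fuzzy_of_points _ lam z.
have ub : ubound S rhs.
  move=> _ [y fy <-]; apply: fuzzy_of_points_le; first exact: fuzzy_of_points_ge0.
  by move=> i gi; apply/le_bigmax_cond/asboolP; rewrite gi.
have le_sup y : f y = z -> fuzzy_of_points g lam y <= sup S.
  by move=> fy; apply: ub_le_sup; [exists rhs | exists y].
apply/le_anti/andP; split; first by apply: ge_sup => //; exists (fuzzy_of_points g lam y0), y0.
apply: fuzzy_of_points_le => [|i fgi].
  exact: le_trans (fuzzy_of_points_ge0 g lam y0) (le_sup y0 fy0).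
exact: le_trans (le_fuzzy_of_points g lam i) (le_sup (g i) fgi).
Qed.

Lemma zadeh_le (u : X -> R) (c : R) z : 0 <= c -> (forall x, u x <= c) -> zadeh f u z <= c.
Proof.
move=> c0 uc; rewrite /zadeh; case: pselect => ? //=.
by apply: sup_le_ub => // _ [y _ <-].
Qed.

Lemma le_zadeh (u : X -> R) (c : R) x : (forall y, u y <= c) -> u x <= zadeh f u (f x).
Proof.
move=> uc; rewrite /zadeh; case: pselect => [?|[]]; last by exists x.
by apply: ub_le_sup; [exists c => _ [y _ <-] | exists x].
Qed.

Lemma iter_zadeh_le (u : X -> R) (c : R) m z : 0 <= c -> (forall x, u x <= c) ->
  iter m (zadeh f) u z <= c.
Proof. by move=> c0 uc; elim: m z => //= m IH z; apply: zadeh_le. Qed.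

Lemma le_iter_zadeh (u : X -> R) (c : R) m x : 0 <= c -> (forall y, u y <= c) ->
  u x <= iter m (zadeh f) u (iter m f x).
Proof.
move=> c0 uc; elim: m => //= m IH.
have bounded y : iter m (zadeh f) u y <= c by apply: iter_zadeh_le.
exact: le_trans IH (le_zadeh _ bounded).
Qed.

End Zadeh.

Section MetricSpace.
Variables (R : realType) (X : Type) (d : X -> X -> R).
Hypothesis hd : is_metric d.

Lemma metric_ge0 x y : 0 <= d x y. Proof. by case: hd. Qed.
Lemma metric_xx x : d x x = 0. Proof. by case: hd => _ H _ _; apply/H. Qed.
Lemma metric_sym x y : d x y = d y x. Proof. by case: hd. Qed.
Lemma metric_tri x y z : d x z <= d x y + d y z. Proof. by case: hd. Qed.

Lemma metric_gt0 x y : x <> y -> 0 < d x y.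
Proof.
move=> xy; rewrite lt_neqAle metric_ge0 andbT eq_sym; apply/eqP => dxy.
by case: hd => _ /(_ x y) [/(_ dxy)].
Qed.

Definition mball (c : X) (e : R) : set X := [set y | d c y < e].

Lemma mball_center c (e : R) : 0 < e -> mball c e c.
Proof. by rewrite /mball /= metric_xx. Qed.

Lemma mopen_mball c (e : R) : mopen d (mball c e).
Proof.
split => // y /= cy; exists (e - d c y); first by rewrite subr_gt0.
by move=> z _ yz; rewrite /mball /=; have := metric_tri c y z; lra.
Qed.

Lemma mopen_dist_gt c (e : R) : mopen d [set y | e < d c y].
Proof.
split => // y /= cy; exists (d c y - e); first by rewrite subr_gt0.
by move=> z _ yz /=; have := metric_tri c z y; rewrite (metric_sym z y); lra.
Qed.

Lemma mopen_preimage (g : X -> X) (V : set X) : mcontinuous d g -> mopen d V ->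
  mopen d (g @^-1` V).
Proof.
move=> gc [_ Vo]; split => // z /= /Vo [e e0 He].
have [del del0 Hdel] := gc z e e0.
by exists del => // y _ /Hdel; apply: He.
Qed.

Lemma mopen_bigcap_fin n (V : 'I_n -> set X) : (forall i, mopen d (V i)) ->
  mopen d (\bigcap_i V i).
Proof.
move=> Vo; split => // z Vz.
have /choice [e He] : forall i, exists e, 0 < e /\ forall y, d z y < e -> V i y.
  move=> i; have [_ /(_ z (Vz i I)) [e e0 He]] := Vo i.
  by exists e; split => // y; apply: He.
exists (\big[Num.min/1]_i e i) => [|y _ zy i _].
  by apply: lt_bigmin => // i _; case: (He i).
by apply: (proj2 (He i)); apply: lt_le_trans zy (bigmin_le _ _ _).
Qed.

Lemma mcontinuous_iter (g : X -> X) m : mcontinuous d g -> mcontinuous d (iter m g).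
Proof.
move=> gc; elim: m => [|m IH] x e e0 /=; first by exists e.
have [del1 del10 H1] := gc (iter m g x) e e0.
have [del2 del20 H2] := IH x del1 del10.
by exists del2 => // y /H2 /H1.
Qed.

Lemma mcompact_labelled_cover (L : Type) (K : set X) (B : L -> set X) (Q : set L) :
  mcompact d K -> (forall l, Q l -> mopen d (B l)) ->
  (forall z, K z -> exists2 l, Q l & B l z) ->
  exists n (l : 'I_n -> L), (forall i, Q (l i)) /\ (forall z, K z -> exists i, B (l i) z).
Proof.
move=> cK Bo cov.
have [|z /cov [l Ql Blz]|C' [C'B fC'] C'cov] := cK (B @` Q).
- by move=> _ [l Ql <-]; apply: Bo.
- by exists (B l) => //; exists l.
have [s Es] := (finite_seqP C').1 fC'.
have /choice [l Hl] : forall i : 'I_(size s), exists l, Q l /\ B l = nth set0 s i.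
  move=> i; have /C'B [l Ql Bl] : C' (nth set0 s i) by rewrite Es /= mem_nth.
  by exists l.
exists (size s), l; split => [i|z /C'cov [U C'U Uz]]; first by case: (Hl i).
have Us : U \in s by move: C'U; rewrite Es.
have si : (index U s < size s)%N by rewrite index_mem.
by exists (Ordinal si); case: (Hl (Ordinal si)) => _ ->; rewrite nth_index.
Qed.

Lemma mcompact_net (K : set X) (e : R) : mcompact d K -> 0 < e ->
  exists n (g : 'I_n -> X), (forall i, K (g i)) /\ (forall z, K z -> exists i, d (g i) z < e).
Proof.
move=> cK e0; apply: (mcompact_labelled_cover (B := mball^~ e)) => // [c _|z Kz].
  exact: mopen_mball.
by exists z => //; apply: mball_center.
Qed.

Lemma mcompact_bounded (K : set X) y : mcompact d K ->
  exists M, forall z, K z -> d y z <= M.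
Proof.
move=> cK; have [n [g [_ net]]] := mcompact_net cK ltr01.
exists (\big[Num.max/0]_i d y (g i) + 1) => z /net [i gz].
by have := metric_tri y (g i) z; have := le_bigmax 0 (fun i => d y (g i)) i; lra.
Qed.

Lemma mcompact_setD (K W : set X) : mcompact d K -> mopen d W -> mcompact d (K `\` W).
Proof.
move=> cK Wo C Co cov.
have [|z Kz|C' [C'CW fC'] C'cov] := cK (C `|` [set W]).
- by move=> U [/Co|->].
- have [Wz|nWz] := pselect (W z); first by exists W => //; right.
  by have [U CU Uz] := cov z (conj Kz nWz); exists U => //; left.
exists (C' `\ W); first split.
- by move=> U [/C'CW [//|UW /(_ UW)]].
- exact: finite_setD.
move=> z [Kz nWz]; have [U C'U Uz] := C'cov z Kz.
by exists U => //; split => // UW; apply: nWz; rewrite -UW.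
Qed.

Lemma mcompact_set1 y : mcompact d [set y].
Proof.
move=> C _ /(_ y erefl) [U CU Uy]; exists [set U].
  by split; [move=> _ -> | exact: finite_set1].
by move=> _ ->; exists U.
Qed.

Lemma image_finite_isolated n (g : 'I_n -> X) (Q : set 'I_n) x :
  exists2 m, 0 < m & forall y, d x y < m -> (g @` Q) y -> y = x.
Proof.
exists (\big[Num.min/1]_(i | `[< g i <> x >]) d x (g i)).
  by apply: lt_bigmin => // i /asboolP /nesym /metric_gt0.
move=> y + [i _ gy]; rewrite -gy; have [//|gix] := pselect (g i = x).
by rewrite ltNge (bigmin_le_cond _ _ (asboolT gix)).
Qed.

Lemma mclosure_image_finite n (g : 'I_n -> X) (Q : set 'I_n) :
  mclosure d (g @` Q) = g @` Q.
Proof.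
apply/seteqP; split => [z zQ|z gz e e0]; last by exists z; rewrite ?metric_xx.
have [m m0 iso] := image_finite_isolated g Q z.
by have [y gy zy] := zQ m m0; rewrite -(iso y zy gy).
Qed.

Lemma mcompact_image_finite n (g : 'I_n -> X) (Q : set 'I_n) : mcompact d (g @` Q).
Proof.
move=> C _ cov.
have /choice [U HU] : forall i, exists U, Q i -> C U /\ U (g i).
  move=> i; have [Qi|nQi] := pselect (Q i); last by exists set0.
  by have [U CU Ug] := cov (g i) (imageP _ Qi); exists U.
exists (U @` Q); first split.
- by move=> _ [i /HU [? _] <-].
- exact/finite_image/finite_finset.
by move=> _ [i Qi <-]; exists (U i); [exists i | case: (HU i Qi)].
Qed.

Lemma Kspace_image_finite n (g : 'I_n -> X) (Q : set 'I_n) : Q !=set0 ->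
  Kspace d (g @` Q).
Proof. by move=> [i Qi]; split; [exact: mcompact_image_finite | exists (g i), i]. Qed.

Lemma Kspace_set1 y : Kspace d [set y].
Proof. by split; [exact: mcompact_set1 | exists y]. Qed.

Lemma hausdorff_image_le n (g h : 'I_n -> X) (Q : set 'I_n) (c : R) : 0 <= c ->
  (forall i, Q i -> d (g i) (h i) <= c) -> hausdorff d (g @` Q) (h @` Q) <= c.
Proof.
move=> c0 gh; apply: (hausdorff_le metric_ge0) => // [_ [i Qi <-]|_ [i Qi <-]].
  by exists (h i); [exists i | exact: gh].
by exists (g i); [exists i | rewrite metric_sym; exact: gh].
Qed.

Lemma hausdorff_net_le (K : set X) n (g v : 'I_n -> X) (r : R) : 0 < r ->
  (forall i, K (g i)) -> (forall z, K z -> exists i, d (g i) z < r) ->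
  (forall i, d (g i) (v i) < r) -> hausdorff d K (range v) <= 2 * r.
Proof.
move=> r0 Kg net gv; apply: (hausdorff_le metric_ge0) => [|z Kz|_ [i _ <-]].
- lra.
- have [i gz] := net z Kz; exists (v i); first by exists i.
  by have := metric_tri z (g i) (v i); have := gv i; rewrite (metric_sym z (g i)); lra.
- by exists (g i) => //; have := gv i; rewrite metric_sym; lra.
Qed.

Lemma Kspace_hausdorff_near (K K' : set X) (del : R) b : Kspace d K -> Kspace d K' ->
  hausdorff d K K' < del -> K' b -> exists2 a, K a & d b a < del.
Proof.
move=> [_ [k Kk]] [cK' _] KK' K'b.
apply: (hausdorff_lt_near KK' K'b); last by exists k.
have [M HM] := mcompact_bounded k cK'.
exists M => _ [b' K'b' <-]; apply: le_trans (pt_set_dist_le metric_ge0 _ Kk) _.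
by rewrite metric_sym; apply: HM.
Qed.

Lemma mopen_usc_lt (u : X -> R) (t : R) : usc d u -> mopen d [set z | u z < t].
Proof. by move=> uusc; split => // z /uusc [e e0 He]; exists e => // y _ /He. Qed.

Lemma usc_mcompact_lt (u : X -> R) (K : set X) (a : R) : usc d u -> mcompact d K ->
  (forall z, K z -> u z < a) -> exists2 T, T < a & forall z, K z -> u z <= T.
Proof.
move=> uusc cK Ka.
have [|z Kz|n [t [ta cov]]] := mcompact_labelled_cover (B := fun t => [set z | u z < t])
  (Q := [set t | t < a]) cK.
- by move=> t _; apply: mopen_usc_lt.
- by exists ((u z + a) / 2); rewrite /=; have := Ka z Kz; lra.
exists (\big[Num.max/(a - 1)]_i t i) => [|z /cov [i uzt]].
  by apply: bigmax_lt => [|i _]; [lra | exact: ta].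
exact: ltW (lt_le_trans uzt (le_bigmax _ _ _)).
Qed.

Lemma alpha_cut_gt0 (u : X -> R) (a : R) : 0 < a -> alpha_cut d u a = [set z | a <= u z].
Proof. by move=> a0; rewrite /alpha_cut gt_eqF. Qed.

Lemma alpha_cut0_support (u : X -> R) z : 0 < u z -> alpha_cut d u 0 z.
Proof. by move=> uz; rewrite /alpha_cut eqxx => e e0; exists z; rewrite ?metric_xx. Qed.

Lemma alpha_cut_fuzzy_of_points n (g : 'I_n -> X) (lam : 'I_n -> R) (a : R) :
  (forall i, 0 < lam i) -> 0 <= a ->
  alpha_cut d (fuzzy_of_points g lam) a = g @` [set i | a <= lam i].
Proof.
move=> lam0; rewrite le_eqVlt => /predU1P [<-|a0]; last first.
  rewrite alpha_cut_gt0 //; apply/seteqP; split => [z /(fuzzy_of_points_geP a0)|].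
    by move=> [i gi ai]; exists i.
  by move=> _ [i ai <-]; apply: le_trans ai (le_fuzzy_of_points _ _ _).
rewrite /alpha_cut eqxx -(mclosure_image_finite g); congr mclosure.
apply/seteqP; split => [z z0|_ [i _ <-]].
  have [i gi zi] := fuzzy_of_points_geP z0 (lexx _).
  by exists i => //; apply/ltW/(lt_le_trans z0).
exact: lt_le_trans (lam0 i) (le_fuzzy_of_points _ _ _).
Qed.

Lemma usc_fuzzy_of_points n (g : 'I_n -> X) (lam : 'I_n -> R) :
  usc d (fuzzy_of_points g lam).
Proof.
move=> x t xt; have [m m0 iso] := image_finite_isolated g setT x.
exists m => // y xy; have [->//|yx] := pselect (y = x).
rewrite fuzzy_of_points_eq0; first exact: le_lt_trans (fuzzy_of_points_ge0 _ _ _) xt.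
by move=> gy; apply: yx; apply: iso.
Qed.

Lemma Fspace_fuzzy_of_points n (g : 'I_n -> X) (lam : 'I_n -> R) :
  (forall i, 0 < lam i <= 1) -> (exists i, lam i = 1) -> Fspace d (fuzzy_of_points g lam).
Proof.
move=> lam01 [i1 lam1]; have lam0 i : 0 < lam i by case/andP: (lam01 i).
split.
- move=> z; rewrite fuzzy_of_points_ge0 /=.
  by apply: fuzzy_of_points_le => // i _; case/andP: (lam01 i).
- exact: usc_fuzzy_of_points.
- by rewrite alpha_cut_fuzzy_of_points //; apply: mcompact_image_finite.
- by rewrite alpha_cut_fuzzy_of_points //; exists (g i1), i1; rewrite /= ?lam1.
Qed.

Lemma d_infty_le (u v : X -> R) (c : R) :
  (forall a, 0 <= a <= 1 -> hausdorff d (alpha_cut d u a) (alpha_cut d v a) <= c) ->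
  d_infty d u v <= c.
Proof.
move=> uvc; apply: ge_sup => [|_ [a a01 <-]]; last exact: uvc.
by exists (hausdorff d (alpha_cut d u 0) (alpha_cut d v 0)), 0; rewrite //= lexx ler01.
Qed.

Lemma d_infty_fuzzy_of_points_le n (g h : 'I_n -> X) (lam : 'I_n -> R) (c : R) :
  (forall i, 0 < lam i) -> 0 <= c -> (forall i, d (g i) (h i) <= c) ->
  d_infty d (fuzzy_of_points g lam) (fuzzy_of_points h lam) <= c.
Proof.
move=> lam0 c0 gh; apply: d_infty_le => a /andP [a0 _].
by rewrite !alpha_cut_fuzzy_of_points //; apply: hausdorff_image_le.
Qed.

Lemma d_E_lt_near (u w : X -> R) (del : R) z (a : R) : (forall x, 0 <= u x) ->
  d_E d u w < del -> 0 <= a <= 1 -> a <= w z -> exists2 z', d z z' < del & a - del < u z'.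
Proof.
move=> u0 uw a01 az.
have dbar_ge0 p q : 0 <= dbar d p q by rewrite /dbar le_max metric_ge0.
have ub : has_ubound [set pt_set_dist (dbar d) b (endograph u) | b in endograph w].
  exists 1 => _ [b [/andP [b0 b1] _] <-].
  have ub0 : endograph u (b.1, 0) by split; rewrite /= ?lexx ?ler01 ?u0.
  apply: le_trans (pt_set_dist_le dbar_ge0 _ ub0) _.
  by rewrite /dbar /= metric_xx subr0 ger0_norm // ge_max ler01.
have za : endograph w (z, a) by [].
have u_ne : endograph u !=set0 by exists (z, 0); split; rewrite /= ?lexx ?ler01 ?u0.
have [[z' a'] [_ a'u]] := hausdorff_lt_near uw za ub u_ne.
rewrite /dbar /= gt_max ltr_norml => /andP [zz' /andP [_ aa']].
by exists z' => //; move: a'u => /=; lra.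
Qed.

Definition ball_sup (u : X -> R) (c : X) (r : R) : R := sup [set u z | z in mball c r].

Lemma le_ball_sup (u : X -> R) c (r M : R) z : (forall x, u x <= M) -> d c z < r ->
  u z <= ball_sup u c r.
Proof. by move=> uM cz; apply: ub_le_sup; [exists M => _ [? _ <-] | exists z]. Qed.

Lemma ball_sup_le (u : X -> R) c (r M : R) : 0 <= M -> (forall x, u x <= M) ->
  ball_sup u c r <= M.
Proof. by move=> M0 uM; apply: sup_le_ub => // _ [? _ <-]. Qed.

Lemma ball_sup_gt0 (u : X -> R) c (r M : R) : (forall x, u x <= M) ->
  alpha_cut d u 0 c -> 0 < r -> 0 < ball_sup u c r.
Proof.
rewrite /alpha_cut eqxx => uM /[apply] -[y /= uy cy].
exact: lt_le_trans uy (le_ball_sup uM cy).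
Qed.

Lemma ball_sup_attained (u : X -> R) c (r a : R) : usc d u -> mcompact d (alpha_cut d u 0) ->
  0 < a -> a <= ball_sup u c r -> exists2 z, a <= u z & d c z <= r.
Proof.
(* Otherwise u < a on the compact set u_0 minus the exterior of the closed ball, so u is
   bounded there by some T < a, while the supremum puts a value above max T 0 in the ball. *)
move=> uusc cu0 a0 ar; have [//|none] := pselect (exists2 z, a <= u z & d c z <= r).
have [|T Ta uT] := usc_mcompact_lt (a := a) uusc (mcompact_setD cu0 (mopen_dist_gt c r)).
  move=> z [_ /= zr]; rewrite ltNge; apply/negP => az.
  by apply: none; exists z; rewrite // leNgt; apply/negP.
have S0 : [set u z | z in mball c r] !=set0.
  by apply/set0P/negP => /eqP S0; move: ar; rewrite /ball_sup S0 sup0; lra.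
have T0a : Num.max T 0 < a by rewrite gt_max Ta a0.
have [_ [z cz <-]] := sup_gt S0 (lt_le_trans T0a ar).
rewrite gt_max => /andP [Tz uz0].
have : u z <= T.
  apply: uT; split; first exact: alpha_cut0_support.
  by move: cz; rewrite /mball /=; lra.
by rewrite leNgt Tz.
Qed.

(* Labelling v i by the supremum of u near g i makes every cut of the finite fuzzy set
   shadow the corresponding cut of u. *)
Lemma d_infty_fuzzy_net_le (u : X -> R) n (g v : 'I_n -> X) (r : R) : Fspace d u -> 0 < r ->
  (forall i, alpha_cut d u 0 (g i)) ->
  (forall z, alpha_cut d u 0 z -> exists i, d (g i) z < r) ->
  (forall i, d (g i) (v i) < r) ->
  d_infty d u (fuzzy_of_points v (fun i => ball_sup u (g i) r)) <= 2 * r.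
Proof.
move=> [u01 uusc cu0 _] r0 u0g net gv.
have u1 z : u z <= 1 by case/andP: (u01 z).
have lam0 i : 0 < ball_sup u (g i) r := ball_sup_gt0 u1 (u0g i) r0.
apply: d_infty_le => a /andP [+ _]; rewrite le_eqVlt => /predU1P [<-|a0].
  rewrite alpha_cut_fuzzy_of_points //.
  have -> : [set i | 0 <= ball_sup u (g i) r] = setT.
    by apply/seteqP; split => // i _; apply/ltW.
  exact: hausdorff_net_le.
rewrite alpha_cut_fuzzy_of_points ?(ltW a0) // alpha_cut_gt0 //.
apply: (hausdorff_le metric_ge0) => [|z /= az|_ [i /= ai <-]]; first lra.
- have [i gz] := net z (alpha_cut0_support (lt_le_trans a0 az)).
  exists (v i); first by exists i => //; apply: le_trans az (le_ball_sup u1 gz).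
  by have := metric_tri z (g i) (v i); have := gv i; rewrite (metric_sym z (g i)); lra.
- have [z az gz] := ball_sup_attained uusc cu0 a0 ai.
  exists z => //; have := metric_tri (v i) (g i) z; have := gv i.
  by rewrite (metric_sym (v i) (g i)); lra.
Qed.

Lemma mopen_Kspace_sub_mball y (e : R) :
  mopen_in (hausdorff d) (Kspace d) [set K | Kspace d K /\ exists2 r, r < e & K `<=` mball y r].
Proof.
split=> [K []//|K [KK [r re Kr]]]; exists ((e - r) / 2); first lra.
move=> K' K'K KK'; split => //; exists (r + (e - r) / 2); first lra.
move=> z K'z; have [a Ka za] := Kspace_hausdorff_near KK K'K KK' K'z.
by have := Kr a Ka; have := metric_tri y a z; rewrite /mball /= (metric_sym a z); lra.
Qed.

Lemma mopen_Fspace_cut_sub_mball y (e : R) : e <= 1 ->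
  mopen_in (d_E d) (Fspace d)
    [set u | Fspace d u /\ exists2 r, 0 < r < e & [set z | r <= u z] `<=` mball y r].
Proof.
move=> e1; split=> [u []//|u [[u01 _ _ _] [r /andP [r0 re] ur]]].
have u0 x : 0 <= u x by case/andP: (u01 x).
exists ((e - r) / 2); first lra.
move=> w Fw uw; split => //; exists (r + (e - r) / 2); first by apply/andP; split; lra.
move=> z /= rz; have [|z' zz' uz'] := d_E_lt_near u0 uw _ rz; first by apply/andP; split; lra.
have ruz' : r <= u z' by lra.
have := ur z' ruz'; have := metric_tri y z' z.
by rewrite /mball /= (metric_sym z' z); lra.
Qed.

End MetricSpace.

Section Dynamics.
Variables (R : realType) (X : Type) (d : X -> X -> R).
Hypothesis hd : is_metric d.
Variables (A : set (set nat)) (f : X -> X).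
Hypothesis hA : furstenberg A.

Lemma furstenberg_neq0 F : A F -> F !=set0.
Proof. by case: hA => A0 _ AF; apply/set0P/negP => /eqP F0; apply: A0; rewrite -F0. Qed.

Lemma furstenberg_sub F G : A F -> F `<=` G -> A G.
Proof. by case: hA => _; apply. Qed.

Lemma iter_fN n m (v : 'I_n -> X) i : iter m (fN f) v i = iter m f (v i).
Proof. by elim: m => //= m IH; rewrite /fN IH. Qed.

Lemma iter_Kmap m (K : set X) x : K x -> iter m (Kmap f) K (iter m f x).
Proof. by move=> Kx; elim: m => //= m IH; exists (iter m f x). Qed.

Definition mpball n (c : 'I_n -> X) (r : R) : set ('I_n -> X) :=
  [set y | forall i, mball d (c i) r (y i)].

Lemma prod_open_mpball n (c : 'I_n -> X) (r : R) : prod_open d (mpball c r).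
Proof.
move=> y cy; exists (fun i => mball d (y i) (r - d (c i) (y i))); split.
  by move=> i; split; [exact: mopen_mball | apply: mball_center; rewrite // subr_gt0; apply: cy].
move=> w yw i; have := yw i; have := metric_tri hd (c i) (y i) (w i).
by rewrite /mball /=; lra.
Qed.

Lemma A_recurrent_mpball n (v : 'I_n -> X) (r : R) : 0 < r ->
  A_recurrent_pt A setT (@prod_open R X d n) (fN f) v -> A (Nset (fN f) v (mpball v r)).
Proof.
move=> r0 [_ rv]; apply: rv; exists (mpball v r); split => //; first exact: prod_open_mpball.
by move=> i; apply: mball_center.
Qed.

Lemma A_recurrent_near n (g : 'I_n -> X) (r : R) : 0 < r ->
  point_A_recurrent A setT (@prod_open R X d n) (fN f) ->
  exists2 v, (forall i, d (g i) (v i) < r) & A_recurrent_pt A setT (@prod_open R X d n) (fN f) v.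
Proof.
move=> r0 HN; apply: (HN (mpball g r)); first exact: prod_open_mpball.
by exists g => i; apply: mball_center.
Qed.

Lemma A_recurrent_orbit_tuple n (m : 'I_n -> nat) x : mcontinuous d f ->
  A_transitive_pt A setT (mopen d) f x ->
  A_recurrent_pt A setT (@prod_open R X d n) (fN f) (fun i => iter (m i) f x).
Proof.
move=> fc [_ Hx]; split => // U [V [Vo Vp VU]].
have [W [HW WV]] := Vo _ Vp.
pose O := \bigcap_i (iter (m i) f @^-1` W i).
have Oo : mopen d O.
  apply: mopen_bigcap_fin => // i; apply: mopen_preimage => //.
    exact: mcontinuous_iter.
  by case: (HW i).
have Ox : O x by move=> i _; case: (HW i).
apply: furstenberg_sub (Hx O Oo (ex_intro _ x Ox)) _ => k Ok; apply/VU/WV => i.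
by rewrite iter_fN -iterD addnC iterD; apply: Ok.
Qed.

Lemma A_recurrent_semiconj (Y : Type) (S : set Y) (D : Y -> Y -> R) (g : Y -> Y) n
    (phi : ('I_n -> X) -> Y) (v : 'I_n -> X) :
  (forall w, S (phi w)) -> (forall w, g (phi w) = phi (fN f w)) ->
  (forall w (r : R), 0 < r -> (forall i, d (v i) (w i) <= r) -> D (phi v) (phi w) <= r) ->
  A_recurrent_pt A setT (@prod_open R X d n) (fN f) v -> A_recurrent_pt A S (mopen_in D S) g (phi v).
Proof.
move=> Sphi gphi phi_lip rv; split => // U [V [[_ Vo] Vv VU]].
have [e e0 ve] := Vo _ Vv.
have e2 : 0 < e / 2 by lra.
apply: furstenberg_sub (A_recurrent_mpball e2 rv) _ => m vm.
apply/VU; rewrite /= (iter_semiconj gphi); apply: ve => //.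
apply: le_lt_trans (phi_lip _ _ e2 _) _; last lra.
by move=> i; apply/ltW/vm.
Qed.

Lemma point_A_transitive_of_Kmap :
  point_A_transitive A (Kspace d) (mopen_in (hausdorff d) (Kspace d)) (Kmap f) ->
  point_A_transitive A setT (mopen d) f.
Proof.
move=> [K0 [[_ [x K0x]] HK0]]; exists x; split => // V [_ Vo] [y Vy].
have [e e0 ye] := Vo y Vy.
have Oy : [set K | Kspace d K /\ exists2 r, r < e & K `<=` mball d y r] !=set0.
  exists [set y]; split; first exact: Kspace_set1.
  by exists (e / 2); [lra | move=> _ ->; apply: (mball_center hd); lra].
apply: furstenberg_sub (HK0 _ (mopen_Kspace_sub_mball hd y e) Oy) _.
move=> n [_ [r re Kr]]; apply: ye => //.
exact: lt_trans (Kr _ (iter_Kmap n K0x)) re.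
Qed.

Lemma point_A_transitive_of_zadeh :
  point_A_transitive A (Fspace d) (mopen_in (d_E d) (Fspace d)) (zadeh f) ->
  point_A_transitive A setT (mopen d) f.
Proof.
move=> [u [[u01 _ _ [x ux]] Hu]].
have u1 y : u y <= 1 by case/andP: (u01 y).
have ux1 : 1 <= u x by move: ux; rewrite alpha_cut_gt0.
exists x; split => // V [_ Vo] [y Vy].
have [e1 e10 ye1] := Vo y Vy.
pose e := Num.min e1 1.
have e0 : 0 < e by rewrite lt_min e10 ltr01.
have ee1 : e <= e1 by rewrite ge_min lexx.
have e_le1 : e <= 1 by rewrite ge_min lexx orbT.
have Oy : [set u | Fspace d u /\
    exists2 r, 0 < r < e & [set z | r <= u z] `<=` mball d y r] !=set0.
  exists (fuzzy_of_points (fun _ : 'I_1 => y) (fun _ => 1)); split.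
    by apply: (Fspace_fuzzy_of_points hd) => [_|]; [rewrite ltr01 lexx | exists ord0].
  have e2 : 0 < e / 2 by lra.
  exists (e / 2); first by apply/andP; split; lra.
  by move=> z /(fuzzy_of_points_geP e2) [i <- _]; apply: mball_center.
apply: furstenberg_sub (Hu _ (mopen_Fspace_cut_sub_mball hd y e_le1) Oy) _.
move=> n [_ [r /andP [r0 re] ur]]; apply: ye1 => //.
suff : d y (iter n f x) < r by lra.
by apply: ur; rewrite /= (le_trans _ (le_iter_zadeh f n x ler01 u1)) //; lra.
Qed.

Lemma point_A_recurrent_fN : mcontinuous d f -> point_A_transitive A setT (mopen d) f ->
  forall n, point_A_recurrent A setT (@prod_open R X d n) (fN f).
Proof.
move=> fc [x Hx] n V Vo [v Vv].
have [W [HW WV]] := Vo v Vv.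
have /choice [m Hm] : forall i, exists m, W i (iter m f x).
  move=> i; have [Wo Wv] := HW i.
  by have [k Nk] := furstenberg_neq0 (proj2 Hx _ Wo (ex_intro _ _ Wv)); exists k.
by exists (fun i => iter (m i) f x); [exact: WV | exact: A_recurrent_orbit_tuple].
Qed.

Lemma point_A_recurrent_Kmap :
  (forall n, (0 < n)%N -> point_A_recurrent A setT (@prod_open R X d n) (fN f)) ->
  point_A_recurrent A (Kspace d) (mopen_in (hausdorff d) (Kspace d)) (Kmap f).
Proof.
move=> HN O [OK Oo] [K OK_K].
have [[cK [k Kk]] [e e0 Ke]] := (OK K OK_K, Oo K OK_K).
have e3 : 0 < e / 3 by lra.
have [n [g [Kg net]]] := mcompact_net hd cK e3.
have [i0 _] := net k Kk.
have [v gv rv] := A_recurrent_near g e3 (HN n (leq_ltn_trans (leq0n _) (ltn_ord i0))).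
have Kw (w : 'I_n -> X) : Kspace d (range w) by apply: Kspace_image_finite; exists i0.
exists (range v).
  by apply: Ke (Kw v) _; apply: le_lt_trans (hausdorff_net_le hd e3 Kg net gv) _; lra.
apply: (A_recurrent_semiconj (phi := fun w => range w) Kw _ _ rv) => [w|w r r0 vw].
  exact: image_comp.
by apply: (hausdorff_image_le hd (ltW r0)) => i _; apply: vw.
Qed.

Lemma point_A_recurrent_zadeh :
  (forall n, (0 < n)%N -> point_A_recurrent A setT (@prod_open R X d n) (fN f)) ->
  point_A_recurrent A (Fspace d) (mopen_in (d_infty d) (Fspace d)) (zadeh f).
Proof.
move=> HN O [OF Oo] [u Ou].
have [[u01 _ cu0 [x1 ux1]] [e e0 ue]] := (OF u Ou, Oo u Ou).
have u1 z : u z <= 1 by case/andP: (u01 z).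
have e3 : 0 < e / 3 by lra.
have [n [g [u0g net]]] := mcompact_net hd cu0 e3.
move: ux1; rewrite alpha_cut_gt0 // => /= ux1.
have [i1 gx1] := net x1 (alpha_cut0_support hd (lt_le_trans ltr01 ux1)).
pose lam i := ball_sup d u (g i) (e / 3).
have lam01 i : 0 < lam i <= 1 by rewrite (ball_sup_gt0 u1 (u0g i) e3) (ball_sup_le _ _ _ ler01 u1).
have lam1 : lam i1 = 1.
  by apply/le_anti; rewrite (ball_sup_le _ _ _ ler01 u1) (le_trans ux1 (le_ball_sup u1 gx1)).
have [v gv rv] := A_recurrent_near g e3 (HN n (leq_ltn_trans (leq0n _) (ltn_ord i1))).
have Fw (w : 'I_n -> X) : Fspace d (fuzzy_of_points w lam).
  by apply: (Fspace_fuzzy_of_points hd) => //; exists i1.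
exists (fuzzy_of_points v lam).
  apply: ue (Fw v) _.
  by apply: le_lt_trans (d_infty_fuzzy_net_le hd (OF u Ou) e3 u0g net gv) _; lra.
apply: (A_recurrent_semiconj (phi := fun w => fuzzy_of_points w lam) Fw _ _ rv).
  by move=> w; apply: zadeh_fuzzy_of_points.
move=> w r r0 vw; apply: (d_infty_fuzzy_of_points_le hd) (ltW r0) vw => i.
by case/andP: (lam01 i).
Qed.

End Dynamics.

Unset Implicit Arguments.

Theorem lemma3p6 (R : realType) (X : Type) (d : X -> X -> R)
  (A : set (set nat)) (f : X -> X) :
  is_metric d -> furstenberg A -> mcontinuous d f ->
  [/\ (* (a) *)
      point_A_transitive A (Kspace d) (mopen_in (hausdorff d) (Kspace d)) (Kmap f) ->
      point_A_transitive A setT (mopen d) f,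
      (* (b) *)
      point_A_transitive A (Fspace d) (mopen_in (d_E d) (Fspace d)) (zadeh f) ->
      point_A_transitive A setT (mopen d) f,
      (* (c) *)
      point_A_transitive A setT (mopen d) f ->
      forall N : nat, (0 < N)%N ->
        point_A_recurrent A setT (@prod_open R X d N) (@fN X N f),
      (* (d) *)
      (forall N : nat, (0 < N)%N ->
        point_A_recurrent A setT (@prod_open R X d N) (@fN X N f)) ->
      point_A_recurrent A (Kspace d) (mopen_in (hausdorff d) (Kspace d)) (Kmap f) &
      (* (e) *)
      (forall N : nat, (0 < N)%N ->
        point_A_recurrent A setT (@prod_open R X d N) (@fN X N f)) ->
      point_A_recurrent A (Fspace d) (mopen_in (d_infty d) (Fspace d)) (zadeh f)].
Proof.
move=> hd hA fc; split.
- exact: point_A_transitive_of_Kmap.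
- exact: point_A_transitive_of_zadeh.
- by move=> tr N _; apply: point_A_recurrent_fN.
- exact: point_A_recurrent_Kmap.
- exact: point_A_recurrent_zadeh.
Qed.
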